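(* An idempotent semiring $S$ satisfies the identity $x+xyx+x\approx x$ if and only if it satisfies the identity $xz+xyz+xz\approx xz$.
   Context: An idempotent semiring is an algebra $(S,+,\cdot)$ with two binary operations such that $(S,+)$ and $(S,\cdot)$ are bands (associative, with $x+x=x$ and $xx=x$), and both distributive laws $x(y+z)=xy+xz$ and $(x+y)z=xz+yz$ hold; addition is not assumed commutative. *)

(* An idempotent semiring: (S,+) and (S,.) are bands (associative and
   idempotent), both distributive laws hold; + is NOT assumed commutative. *)
Definition is_idempotent_semiring (S : Type) (add mul : S -> S -> S) : Prop :=
  (forall x y z, add x (add y z) = add (add x y) z) /\
  (forall x, add x x = x) /\
  (forall x y z, mul x (mul y z) = mul (mul x y) z) /\
  (forall x, mul x x = x) /\
  (forall x y z, mul x (add y z) = add (mul x y) (mul x z)) /\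
  (forall x y z, mul (add x y) z = add (mul x z) (mul y z)).

(** Multiply the instance of [x + xyx + x = x] at [x + z] by [x] on the left
    and by [z] on the right: the outer terms collapse to [xz], and the middle
    term expands to a sum containing [xyz].  In a band, [a + p + b + q + a = a]
    forces [a + b + a = a], which yields [xz + xyz + xz = xz].  Conversely,
    [z = x] specialises the second identity to the first. *)

From Stdlib Require Import Setoid.

Section Band.

Variables (T : Type) (op : T -> T -> T).
Hypothesis opA : forall x y z, op x (op y z) = op (op x y) z.
Hypothesis opI : forall x, op x x = x.

Lemma band_absorb_suffix a p g : op (op a p) g = a -> op a g = a.
Proof.
  intros Ha. rewrite <- Ha at 1. rewrite <- opA, opI. exact Ha.
Qed.

Lemma band_absorb_middle a p b q :
  op (op a (op (op p b) q)) a = a -> op (op a b) a = a.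
Proof.
  intros H.
  assert (Hg : op a (op (op b q) a) = a).
  { apply (band_absorb_suffix a p). rewrite !opA. rewrite !opA in H. exact H. }
  rewrite <- Hg at 2.
  rewrite !opA, <- (opA (op a b) a b), opI.
  rewrite <- (opA b q a) in Hg. rewrite <- !opA. exact Hg.
Qed.

End Band.

Section IdempotentSemiring.

Variables (S : Type) (add mul : S -> S -> S).
Hypothesis addA : forall x y z, add x (add y z) = add (add x y) z.
Hypothesis addI : forall x, add x x = x.
Hypothesis mulA : forall x y z, mul x (mul y z) = mul (mul x y) z.
Hypothesis mulI : forall x, mul x x = x.
Hypothesis mulDr : forall x y z, mul x (add y z) = add (mul x y) (mul x z).
Hypothesis mulDl : forall x y z, mul (add x y) z = add (mul x z) (mul y z).

Local Notation "x + y" := (add x y).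
Local Notation "x * y" := (mul x y).

Lemma mul_absorb_r x y : x * y * y = x * y.
Proof. rewrite <- mulA, mulI. reflexivity. Qed.

Lemma mul_sandwich_addr x z : x * (x + z) * z = x * z.
Proof. rewrite mulDr, mulI, mulDl, mul_absorb_r, addI. reflexivity. Qed.

Lemma mul_sandwich_add3 x u v w z :
  x * (u + v + w) * z = x * u * z + x * v * z + x * w * z.
Proof. rewrite !mulDr, !mulDl. reflexivity. Qed.

Lemma mul_sandwich_xyx_addr x y z :
  x * ((x + z) * y * (x + z)) * z
  = x * y * x * z + x * z * y * x * z + x * y * z + x * z * y * z.
Proof.
  repeat rewrite ?mulDr, ?mulDl, ?mulA, ?mulI, ?mul_absorb_r, ?addA.
  reflexivity.
Qed.

Lemma absorb_xyz_of_absorb_xyx :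
  (forall x y, x + x * y * x + x = x) ->
  forall x y z, x * z + x * y * z + x * z = x * z.
Proof.
  intros H x y z.
  assert (Hxz := f_equal (fun u => x * u * z) (H (x + z) y)). cbn in Hxz.
  rewrite mul_sandwich_add3, mul_sandwich_xyx_addr, !mul_sandwich_addr in Hxz.
  exact (band_absorb_middle S add addA addI _ _ _ _ Hxz).
Qed.

Lemma absorb_xyx_of_absorb_xyz :
  (forall x y z, x * z + x * y * z + x * z = x * z) ->
  forall x y, x + x * y * x + x = x.
Proof. intros G x y. rewrite <- (mulI x) at 1 4 5. apply G. Qed.

End IdempotentSemiring.

Theorem lemma2p4 (S : Type) (add mul : S -> S -> S) :
  is_idempotent_semiring S add mul ->
  ((forall x y : S, add (add x (mul (mul x y) x)) x = x) <->
   (forall x y z : S,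
      add (add (mul x z) (mul (mul x y) z)) (mul x z) = mul x z)).
Proof.
  intros (addA & addI & mulA & mulI & mulDr & mulDl).
  split.
  - exact (absorb_xyz_of_absorb_xyx S add mul addA addI mulA mulI mulDr mulDl).
  - exact (absorb_xyx_of_absorb_xyz S add mul mulI).
Qed.
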